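(* Let $P$ and $Q$ be irreducible transition matrices on the finite set $S$, both reversible with respect to $\pi$. If $P$ efficiency-dominates $Q$ and $P\ne Q$, then $\mathrm{trace}(P)<\mathrm{trace}(Q)$.
   Context: $S$ is a finite set, and $\pi$ is a probability distribution on $S$ with $\pi(x)>0$ for all $x$. A transition matrix $P$ is reversible with respect to $\pi$ if $\pi(x)P(x,y)=\pi(y)P(y,x)$ for all $x,y$; irreducible if every state can be reached from every other with positive probability in some number of steps. For a Markov chain $X_1,X_2,\dots$ with transition matrix $P$ and $X_1\sim\pi$, $v(f,P)=\lim_{N\to\infty}\frac1N\mathrm{Var}\big(\sum_{i=1}^N f(X_i)\big)$. $P$ efficiency-dominates $Q$ if $v(f,P)\le v(f,Q)$ for all $f:S\to\mathbb R$. *)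

From HB Require Import structures.
From mathcomp Require Import all_boot all_order all_algebra.
From mathcomp Require Import all_classical all_reals all_analysis.
Set Implicit Arguments. Unset Strict Implicit. Unset Printing Implicit Defensive.
Import Order.TTheory GRing.Theory Num.Theory.
Import numFieldNormedType.Exports.
Local Open Scope ring_scope.

Section MC.
Variables (R : realType) (T : finType).

Definition full_distribution (pi : T -> R) :=
  (forall x, 0 < pi x) /\ \sum_x pi x = 1.

Definition transition_matrix (P : T -> T -> R) :=
  (forall x y, 0 <= P x y) /\ (forall x, \sum_y P x y = 1).

Definition reversible (pi : T -> R) (P : T -> T -> R) :=
  forall x y, pi x * P x y = pi y * P y x.

Fixpoint mpow (P : T -> T -> R) (n : nat) : T -> T -> R :=
  match n with
  | 0 => fun x y => if x == y then 1 else 0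
  | n'.+1 => fun x y => \sum_z mpow P n' x z * P z y
  end.

Definition irreducible (P : T -> T -> R) :=
  forall x y, exists n, 0 < mpow P n x y.

Definition trace (P : T -> T -> R) : R := \sum_x P x x.

(* predecessor of a positive index i : 'I_N (returns 0 for i = 0) *)
Definition pred_ord (N : nat) (i : 'I_N) : 'I_N :=
  Ordinal (leq_ltn_trans (leq_pred i) (ltn_ord i)).

(* probability that (X_1,...,X_N) = (x 0, ..., x (N-1)) for the chain
   with transition matrix P started at X_1 ~ pi *)
Definition path_prob (pi : T -> R) (P : T -> T -> R) (N : nat)
  (x : {ffun 'I_N -> T}) : R :=
  \prod_(i < N) (if val i == 0%N then pi (x i) else P (x (pred_ord i)) (x i)).

Definition path_sum (f : T -> R) (N : nat) (x : {ffun 'I_N -> T}) : R :=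
  \sum_(i < N) f (x i).

Definition mean_sum (pi : T -> R) (P : T -> T -> R) (f : T -> R) (N : nat) : R :=
  \sum_(x : {ffun 'I_N -> T}) path_prob pi P x * path_sum f x.

Definition var_sum (pi : T -> R) (P : T -> T -> R) (f : T -> R) (N : nat) : R :=
  \sum_(x : {ffun 'I_N -> T})
     path_prob pi P x * (path_sum f x - mean_sum pi P f N) ^+ 2.

Definition asymp_var (pi : T -> R) (f : T -> R) (P : T -> T -> R) : R :=
  limn ((fun N : nat => var_sum pi P f N / N%:R) : R^nat).

Definition efficiency_dominates (pi : T -> R) (P Q : T -> T -> R) :=
  forall f : T -> R, asymp_var pi f P <= asymp_var pi f Q.

End MC.

From HB Require Import structures.
From mathcomp Require Import all_boot all_order all_algebra.
From mathcomp Require Import all_classical all_reals all_analysis.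
From mathcomp Require Import ring lra.
Import Order.TTheory GRing.Theory Num.Theory.
Import numFieldNormedType.Exports.
Local Open Scope ring_scope.
Set Implicit Arguments. Unset Strict Implicit. Unset Printing Implicit Defensive.

(* If [g - P g = f0] with [f0 = f - pi f] (a Poisson equation, solvable for irreducible [P]),
   the autocovariances of [f] along the stationary reversible chain telescope and
   [Var(f(X_1) + ... + f(X_N)) / N] tends to [2 <f0, g> - <f0, f0>], where [<., .>] is the
   inner product of [L^2(pi)].
   Given [h], the Poisson equation of [f = h - Q h] is solved by [h] for [Q] and by some [g_P]
   for [P]; comparing the two asymptotic variances and using positivity of the Dirichlet form
   [<w - P w, w>] at [w = h - g_P] yields [<h, P h> <= <h, Q h>] for every [h].
   Testing this on [h = 1_x] gives [P x x <= Q x x]; if the traces were equal, all diagonal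
   entries would agree and [h = 1_x +- 1_y] together with reversibility would force [P = Q]. *)

Section Forms.
Variables (R : realType) (T : finType).

Definition mact (M : T -> T -> R) (w : T -> R) (s : T) : R := \sum_t M s t * w t.

Definition pdot (pi u w : T -> R) : R := \sum_s pi s * u s * w s.

Definition pmean (pi f : T -> R) : R := \sum_s pi s * f s.

Definition center (pi f : T -> R) (s : T) : R := f s - pmean pi f.

Lemma pdotC pi u w : pdot pi u w = pdot pi w u.
Proof. by apply: eq_bigr => s _; rewrite mulrAC. Qed.

Lemma pdotBl pi u v w :
  pdot pi (fun s => u s - v s) w = pdot pi u w - pdot pi v w.
Proof. by rewrite /pdot -sumrB; apply: eq_bigr => s _; ring. Qed.

Lemma pdotBr pi u v w :
  pdot pi w (fun s => u s - v s) = pdot pi w u - pdot pi w v.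
Proof. by rewrite pdotC pdotBl !(pdotC _ w). Qed.

Lemma mactB M u w s : mact M (fun t => u t - w t) s = mact M u s - mact M w s.
Proof. by rewrite /mact -sumrB; apply: eq_bigr => t _; rewrite mulrBr. Qed.

Lemma sum_mul_delta (F : T -> R) t : \sum_z F z * (if z == t then 1 else 0) = F t.
Proof.
by rewrite (bigD1 t) //= eqxx mulr1 big1 ?addr0 // => z /negbTE ->; rewrite mulr0.
Qed.

Lemma sum_delta_mul (F : T -> R) t : \sum_z (if t == z then 1 else 0) * F z = F t.
Proof.
rewrite (bigD1 t) //= eqxx mul1r big1 ?addr0 // => z.
by rewrite eq_sym => /negbTE ->; rewrite mul0r.
Qed.

Lemma pdot_indicator2 pi (M : T -> T -> R) x y c :
  let h s := (if s == x then 1 else 0) + c * (if s == y then 1 else 0) in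
  pdot pi h (mact M h) =
  pi x * (M x x + c * M x y) + c * (pi y * (M y x + c * M y y)).
Proof.
move=> h; have Mh s : mact M h s = M s x + c * M s y.
  by rewrite /mact /h -(sum_mul_delta (M s) x) -(sum_mul_delta (M s) y) mulr_sumr -big_split;
    apply: eq_bigr => t _ /=; rewrite mulrDr mulrCA.
rewrite /pdot; under eq_bigr => s _ do rewrite Mh.
rewrite -(sum_mul_delta (fun s => pi s * (M s x + c * M s y)) x).
rewrite -(sum_mul_delta (fun s => pi s * (M s x + c * M s y)) y) mulr_sumr -big_split.
apply: eq_bigr => s _ /=; rewrite /h.
by move: (if s == x then _ else _) (if s == y then _ else _) => a b; ring.
Qed.

End Forms.

Section MatrixPower.
Variables (R : realType) (T : finType) (P : T -> T -> R).

Lemma mpowS n u t : mpow P n.+1 u t = \sum_s P u s * mpow P n s t.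
Proof.
elim: n u t => [|n IH] u t; first by rewrite /= sum_delta_mul sum_mul_delta.
transitivity (\sum_z mpow P n.+1 u z * P z t); first by [].
under eq_bigr => z _ do rewrite IH mulr_suml.
rewrite exchange_big; apply: eq_bigr => s _ /=.
by rewrite mulr_sumr; apply: eq_bigr => z _; rewrite mulrA.
Qed.

Lemma mpow1 s t : mpow P 1 s t = P s t.
Proof. by rewrite mpowS /= sum_mul_delta. Qed.

Lemma mact_mpow0 w s : mact (mpow P 0) w s = w s.
Proof. exact: sum_delta_mul. Qed.

Lemma mact_mpow1 w s : mact (mpow P 1) w s = mact P w s.
Proof. by apply: eq_bigr => t _; rewrite mpow1. Qed.

Lemma mact_mpowS n w s :
  mact (mpow P n.+1) w s = \sum_z P s z * mact (mpow P n) w z.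
Proof.
rewrite /mact; under eq_bigr => t _ do rewrite mpowS mulr_suml.
rewrite exchange_big; apply: eq_bigr => z _ /=.
by rewrite mulr_sumr; apply: eq_bigr => t _; rewrite mulrA.
Qed.

Lemma mact_mpowSr n w s : mact (mpow P n.+1) w s = mact (mpow P n) (mact P w) s.
Proof.
rewrite /mact; under eq_bigr => t _ do rewrite [mpow _ _ _ _]/= mulr_suml.
rewrite exchange_big; apply: eq_bigr => z _ /=.
by rewrite mulr_sumr; apply: eq_bigr => t _; rewrite mulrA.
Qed.

Hypothesis P_ge0 : forall x y, 0 <= P x y.
Hypothesis P_sum1 : forall x, \sum_y P x y = 1.

Lemma mpow_ge0 n s t : 0 <= mpow P n s t.
Proof.
elim: n s t => [|n IH] s t /=; first by case: eqP.
by apply: sumr_ge0 => z _; rewrite mulr_ge0.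
Qed.

Lemma mpow_sum1 n s : \sum_t mpow P n s t = 1.
Proof.
elim: n s => [|n IH] s.
  by rewrite /= (bigD1 s) //= eqxx big1 ?addr0 // => t; rewrite eq_sym => /negbTE ->.
rewrite -(IH s); under eq_bigr => t _ do rewrite [mpow _ _ _ _]/=.
rewrite exchange_big; apply: eq_bigr => z _ /=.
by rewrite -mulr_sumr P_sum1 mulr1.
Qed.

Lemma mpow_le1 n s t : mpow P n s t <= 1.
Proof.
rewrite -(mpow_sum1 n s) (bigD1 t) //= lerDl.
by apply: sumr_ge0 => z _; apply: mpow_ge0.
Qed.

Lemma norm_mact_mpow_le n w s : `|mact (mpow P n) w s| <= \sum_t `|w t|.
Proof.
rewrite (le_trans (ler_norm_sum _ _ _)) //; apply: ler_sum => t _.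
by rewrite normrM ger0_norm ?mpow_ge0 // ler_piMl ?mpow_le1.
Qed.

End MatrixPower.

Section PathExpectation.
Variables (R : realType) (T : finType) (P : T -> T -> R).

Definition path_expect (mu : T -> R) N (H : nat -> T -> R) : R :=
  \sum_(x : {ffun 'I_N -> T}) path_prob mu P x * \prod_(i < N) H i (x i).

Definition push (mu h : T -> R) (s : T) : R := \sum_t mu t * h t * P t s.

Definition ffun_cons N (t : T) (y : {ffun 'I_N -> T}) : {ffun 'I_N.+1 -> T} :=
  [ffun i => if unlift ord0 i is Some j then y j else t].

Lemma ffun_cons0 N t (y : {ffun 'I_N -> T}) : ffun_cons t y ord0 = t.
Proof. by rewrite ffunE unlift_none. Qed.

Lemma ffun_consS N t (y : {ffun 'I_N -> T}) j : ffun_cons t y (lift ord0 j) = y j.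
Proof. by rewrite ffunE liftK. Qed.

Lemma big_ffun_cons N (F : {ffun 'I_N.+1 -> T} -> R) :
  \sum_x F x = \sum_t \sum_(y : {ffun 'I_N -> T}) F (ffun_cons t y).
Proof.
rewrite pair_big (reindex (fun p : T * {ffun 'I_N -> T} => ffun_cons p.1 p.2)) //.
exists (fun x : {ffun 'I_N.+1 -> T} => (x ord0, [ffun j : 'I_N => x (lift ord0 j)])).
  move=> [t y] _ /=.
  by rewrite ffun_cons0; congr pair; apply/ffunP => j; rewrite ffunE ffun_consS.
by move=> x _; apply/ffunP => i; rewrite ffunE; case: unliftP => [j|] ->; rewrite ?ffunE.
Qed.

Lemma path_prob_init N mu (y : {ffun 'I_N.+1 -> T}) :
  path_prob mu P y = mu (y ord0) * path_prob (fun _ => 1) P y.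
Proof. by rewrite /path_prob !big_ord_recl /= mul1r. Qed.

Lemma path_prob_cons N mu t (y : {ffun 'I_N -> T}) :
  path_prob mu P (ffun_cons t y) = mu t * path_prob (P t) P y.
Proof.
rewrite /path_prob big_ord_recl /= ffun_cons0; congr (_ * _).
apply: eq_bigr => -[[|k] hk] _ /=; rewrite ffun_consS.
  by rewrite (_ : pred_ord _ = ord0) ?ffun_cons0 //; apply: val_inj.
have -> : pred_ord (lift ord0 (Ordinal hk)) = lift ord0 (pred_ord (Ordinal hk)).
  exact: val_inj.
by rewrite ffun_consS.
Qed.

Lemma path_expectS mu N H :
  path_expect mu N.+2 H = path_expect (push mu (H 0%N)) N.+1 (fun k => H k.+1).
Proof.
rewrite /path_expect big_ffun_cons exchange_big; apply: eq_bigr => y _.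
rewrite path_prob_init /push !mulr_suml; apply: eq_bigr => t _.
rewrite path_prob_cons path_prob_init big_ord_recl ffun_cons0.
under eq_bigr => i _ do rewrite ffun_consS lift0.
ring.
Qed.

Lemma path_expect1 mu H : path_expect mu 1 H = \sum_t mu t * H 0%N t.
Proof.
rewrite /path_expect big_ffun_cons; apply: eq_bigr => t _.
under eq_bigr => y _ do rewrite path_prob_cons big_ord1 ffun_cons0 /path_prob big_ord0 mulr1.
by rewrite sumr_const card_ffun card_ord expn0.
Qed.

Hypothesis P_sum1 : forall x, \sum_y P x y = 1.

Lemma path_expect_at m n mu H : (forall k t, k != m -> H k t = 1) ->
  path_expect mu (m + n).+1 H = \sum_s mu s * mact (mpow P m) (H m) s.
Proof.
elim: m mu H => [|m IH] mu H H1.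
  elim: n mu H H1 => [|n IHn] mu H H1.
    by rewrite path_expect1; apply: eq_bigr => s _; rewrite mact_mpow0.
  rewrite path_expectS IHn => [|k t /= _]; last exact: H1.
  under eq_bigr => s _ do rewrite mact_mpow0 H1 // mulr1.
  rewrite /push exchange_big; apply: eq_bigr => t _.
  by rewrite mact_mpow0 -mulr_sumr P_sum1 mulr1.
rewrite addSn path_expectS IH => [|k t km]; last exact: H1.
under eq_bigr => s _ do rewrite /push mulr_suml.
rewrite exchange_big; apply: eq_bigr => t _.
by rewrite mact_mpowS mulr_sumr; apply: eq_bigr => s _; rewrite H1 // mulr1 mulrA.
Qed.

Lemma path_expect_pair0 mu f g d n : (d <= n)%N ->
  path_expect mu n.+1
    (fun k t => (if k == 0%N then f t else 1) * (if k == d then g t else 1))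
  = \sum_s mu s * f s * mact (mpow P d) g s.
Proof.
move=> /subnKC <-; case: d => [|d].
  rewrite (@path_expect_at 0) => [|[|k] t //]; last by rewrite mulr1.
  by apply: eq_bigr => s _; rewrite !mact_mpow0 mulrA.
rewrite addSn path_expectS (@path_expect_at d) => [|k t /negbTE kd]; last first.
  by rewrite /= eqSS kd mul1r.
under eq_bigr => s _ do rewrite /push mulr_suml.
rewrite exchange_big; apply: eq_bigr => u _.
have -> : (fun t => 1 * (if d.+1 == d.+1 then g t else 1)) = g.
  by apply/funext => t; rewrite eqxx mul1r.
by rewrite mact_mpowS !mulr_sumr; apply: eq_bigr => s _; rewrite mulr1 mulrA.
Qed.

Variable pi : T -> R.
Hypothesis pi_stat : forall s, \sum_t pi t * P t s = pi s.

Lemma path_expect_shift i n H : (forall k t, (k < i)%N -> H k t = 1) ->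
  path_expect pi (i + n).+1 H = path_expect pi n.+1 (fun k => H (i + k)%N).
Proof.
elim: i H => [|i IH] H H1 //.
rewrite addSn path_expectS.
have -> : push pi (H 0%N) = pi.
  apply/funext => s; rewrite /push -[RHS]pi_stat.
  by apply: eq_bigr => t _; rewrite H1 ?mulr1.
by rewrite IH // => k t ki; apply: H1.
Qed.

Lemma path_expect_pair f g i j N : (i <= j)%N -> (j < N)%N ->
  path_expect pi N
    (fun k t => (if k == i then f t else 1) * (if k == j then g t else 1))
  = pdot pi f (mact (mpow P (j - i)) g).
Proof.
move=> ij jN; have iN := leq_ltn_trans ij jN.
rewrite -(subnKC iN) addSn path_expect_shift => [|k t ki]; last first.
  by rewrite !ltn_eqF ?mulr1 // (leq_trans ki).
rewrite /pdot -(path_expect_pair0 _ _ _ (_ : j - i <= N - i.+1)%N); last first.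
  by rewrite -subSS leq_sub2r.
congr path_expect; apply/funext => k; apply/funext => t.
by rewrite -{2}(addn0 i) eqn_add2l -{1}(subnKC ij) eqn_add2l.
Qed.

End PathExpectation.

Lemma prod_if_eq (R : comRingType) N (F : 'I_N -> R) (i : 'I_N) :
  \prod_(k < N) (if (k : nat) == i then F k else 1) = F i.
Proof. by rewrite -big_mkcond /= (big_pred1 i). Qed.

Section Variance.
Variables (R : realType) (T : finType) (P : T -> T -> R) (pi : T -> R).
Hypothesis P_sum1 : forall x, \sum_y P x y = 1.
Hypothesis P_rev : reversible pi P.

Lemma reversible_stationary s : \sum_t pi t * P t s = pi s.
Proof. by under eq_bigr => t _ do rewrite P_rev; rewrite -mulr_sumr P_sum1 mulr1. Qed.

Lemma pmean_mact w : pmean pi (mact P w) = pmean pi w.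
Proof.
rewrite /pmean /mact; under eq_bigr => s _ do rewrite mulr_sumr.
rewrite exchange_big; apply: eq_bigr => t _ /=.
by rewrite -reversible_stationary mulr_suml; apply: eq_bigr => s _; rewrite mulrA.
Qed.

Lemma path_expect_prod f g N (i j : 'I_N) : (i <= j)%N ->
  \sum_(x : {ffun 'I_N -> T}) path_prob pi P x * (f (x i) * g (x j))
  = pdot pi f (mact (mpow P (j - i)) g).
Proof.
move=> ij; rewrite -(path_expect_pair P_sum1 reversible_stationary f g ij (ltn_ord j)).
apply: eq_bigr => x _; congr (_ * _).
by rewrite big_split !(prod_if_eq (fun k => _ (x k))).
Qed.

Lemma mean_sumE f N : mean_sum pi P f N = N%:R * pmean pi f.
Proof.
rewrite /mean_sum /path_sum; under eq_bigr => x _ do rewrite mulr_sumr.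
rewrite exchange_big mulr_natl -[N in _ *+ N]card_ord -sumr_const.
apply: eq_bigr => i _; rewrite /=.
transitivity (\sum_(x : {ffun 'I_N -> T}) path_prob pi P x * (f (x i) * 1)).
  by apply: eq_bigr => x _; rewrite mulr1.
rewrite (path_expect_prod f (fun=> 1) (leqnn i)) subnn.
by apply: eq_bigr => s _; rewrite mact_mpow0 mulr1.
Qed.

Lemma var_sumE f N : var_sum pi P f N =
  \sum_(i < N) \sum_(j < N)
     pdot pi (center pi f) (mact (mpow P `|i - j|%N) (center pi f)).
Proof.
set f0 := center pi f.
have centered x : path_sum f x - mean_sum pi P f N = \sum_(i < N) f0 (x i).
  by rewrite mean_sumE /path_sum sumrB sumr_const card_ord mulr_natl.
rewrite /var_sum; under eq_bigr => x _ do rewrite centered expr2 mulr_suml mulr_sumr.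
rewrite exchange_big; apply: eq_bigr => i _ /=.
under eq_bigr => x _ do rewrite !mulr_sumr.
rewrite exchange_big; apply: eq_bigr => j _ /=.
have [ij | /ltnW ji] := leqP i j.
  by rewrite path_expect_prod // distnEr.
under eq_bigr => x _ do rewrite [f0 (x i) * _]mulrC.
by rewrite path_expect_prod // distnEl.
Qed.

End Variance.

Section Reversibility.
Variables (R : realType) (T : finType) (pi : T -> R).

Lemma pdot_mact_sym M u w :
  reversible pi M -> pdot pi u (mact M w) = pdot pi (mact M u) w.
Proof.
move=> M_rev; rewrite /pdot /mact.
under eq_bigr => s _ do rewrite mulr_sumr.
under [RHS]eq_bigr => s _ do rewrite mulr_sumr mulr_suml.
rewrite exchange_big; apply: eq_bigr => t _; apply: eq_bigr => s _ /=.
transitivity (pi s * M s t * u s * w t); first by ring.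
by rewrite M_rev; ring.
Qed.

Lemma mpow_reversible P n : reversible pi P -> reversible pi (mpow P n).
Proof.
move=> P_rev; elim: n => [|n IH] s t.
  by rewrite /= eq_sym; case: eqP => [->|_]; rewrite ?mulr1 ?mulr0.
rewrite mpowS [mpow _ _ _ _]/= !mulr_sumr; apply: eq_bigr => z _.
transitivity (P z s * (pi z * mpow P n z t)); first by rewrite mulrA P_rev; ring.
by rewrite IH; ring.
Qed.

Variable P : T -> T -> R.
Hypothesis P_ge0 : forall x y, 0 <= P x y.
Hypothesis P_sum1 : forall x, \sum_y P x y = 1.
Hypothesis P_rev : reversible pi P.

Lemma dirichlet_formE w :
  2 * pdot pi (fun s => w s - mact P w s) w =
  \sum_s \sum_t pi s * P s t * (w s - w t) ^+ 2.
Proof.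
have row s : \sum_t pi s * P s t * w s ^+ 2 = pi s * w s ^+ 2.
  by rewrite -mulr_suml -mulr_sumr P_sum1 mulr1.
have col : \sum_s \sum_t pi s * P s t * w t ^+ 2 = \sum_t pi t * w t ^+ 2.
  rewrite exchange_big; apply: eq_bigr => t _ /=.
  by rewrite -mulr_suml reversible_stationary.
have cross s : \sum_t pi s * P s t * (w s * w t) = pi s * w s * mact P w s.
  by rewrite /mact mulr_sumr; apply: eq_bigr => t _; ring.
transitivity (\sum_s \sum_t pi s * P s t * w s ^+ 2
  + \sum_s \sum_t pi s * P s t * w t ^+ 2
  - 2 * \sum_s \sum_t pi s * P s t * (w s * w t)).
  rewrite col (eq_bigr _ (fun s _ => row s)) (eq_bigr _ (fun s _ => cross s)).
  by rewrite /pdot !mulr_sumr -big_split -sumrB; apply: eq_bigr => s _ /=; ring.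
rewrite -big_split mulr_sumr -sumrB; apply: eq_bigr => s _ /=.
by rewrite -big_split mulr_sumr -sumrB; apply: eq_bigr => t _ /=; ring.
Qed.

Hypothesis pi_ge0 : forall x, 0 <= pi x.

Lemma dirichlet_form_ge0 w : 0 <= pdot pi (fun s => w s - mact P w s) w.
Proof.
rewrite -(pmulr_rge0 _ (ltr0Sn R 1)) dirichlet_formE.
do 2![apply: sumr_ge0 => ? _].
by rewrite mulr_ge0 ?sqr_ge0 ?mulr_ge0 ?pi_ge0 ?P_ge0.
Qed.

End Reversibility.

Lemma sum_distn_telescope (R : comRingType) (a : nat -> R) N :
  \sum_(i < N) \sum_(j < N) (a `|i - j|%N - a `|i - j|%N.+1) =
  N%:R * (a 0%N + a 1%N) - 2 * \sum_(k < N) a k.+1.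
Proof.
have edge n : \sum_(i < n) (a (n - i)%N - a (n - i).+1) = a 1%N - a n.+1.
  elim: n => [|n IH]; first by rewrite big_ord0 subrr.
  rewrite big_ord_recl subn0; under eq_bigr => i _ do rewrite lift0 subSS.
  by rewrite IH addrC addrA subrK.
have col n : \sum_(i < n) (a `|i - n|%N - a `|i - n|%N.+1) = a 1%N - a n.+1.
  by rewrite -edge; apply: eq_bigr => i _; rewrite distnEr // ltnW.
have row n : \sum_(i < n) (a `|n - i|%N - a `|n - i|%N.+1) = a 1%N - a n.+1.
  by rewrite -edge; apply: eq_bigr => i _; rewrite distnEl // ltnW.
elim: N => [|N IH]; first by rewrite !big_ord0 mul0r mulr0 subr0.
rewrite big_ord_recr /=; under eq_bigr => i _ do rewrite big_ord_recr /=.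
rewrite big_split /= IH col big_ord_recr /= row distnn.
by rewrite [in RHS]big_ord_recr /= -natr1; ring.
Qed.

Lemma limn_sub_bounded_divn (R : realType) (u : R^nat) (L K : R) (B : nat -> R) :
  (forall N, (0 < N)%N -> u N = L - B N / N%:R) -> (forall N, `|B N| <= K) ->
  limn u = L.
Proof.
move=> uE B_le; have K_ge0 : 0 <= K := le_trans (normr_ge0 _) (B_le 0%N).
apply: cvg_lim; first exact: Rhausdorff.
apply/cvgrPdist_le => e e_gt0; have Ke_ge0 : 0 <= K / e by rewrite divr_ge0 // ltW.
near=> N.
have N_gt0 : (0 < N)%N by near: N; apply: nbhs_infty_gt.
have N_ge : (Num.bound (K / e) <= N)%N by near: N; apply: nbhs_infty_ge.
rewrite uE // opprB addrC subrK normrM normfV normr_nat.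
rewrite ler_pdivrMr ?ltr0n // (le_trans (B_le N)) // -ler_pdivrMl // mulrC.
by rewrite (le_trans (ltW (archi_boundP Ke_ge0))) // ler_nat.
Unshelve. all: by end_near.
Qed.

Section AsymptoticVariance.
Variables (R : realType) (T : finType) (P : T -> T -> R) (pi : T -> R).
Hypothesis P_ge0 : forall x y, 0 <= P x y.
Hypothesis P_sum1 : forall x, \sum_y P x y = 1.
Hypothesis P_rev : reversible pi P.
Hypothesis pi_ge0 : forall x, 0 <= pi x.
Variables f g : T -> R.
Let f0 := center pi f.
Hypothesis g_poisson : forall s, g s - mact P g s = f0 s.

Let cross d := pdot pi f0 (mact (mpow P d) g).
Let self d := pdot pi (mact (mpow P d) g) g.
Let K := \sum_s pi s * (\sum_t `|g t|) * `|g s|.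

Lemma mact_mpow_center d s :
  mact (mpow P d) f0 s = mact (mpow P d) g s - mact (mpow P d.+1) g s.
Proof. by rewrite mact_mpowSr -mactB; apply: eq_bigr => t _; rewrite g_poisson. Qed.

Lemma autocovE d : pdot pi f0 (mact (mpow P d) f0) = cross d - cross d.+1.
Proof. by rewrite -pdotBr; congr pdot; apply/funext => s; rewrite mact_mpow_center. Qed.

Lemma sum_cross_telescope N : \sum_(k < N) cross k.+1 = self 1 - self N.+1.
Proof.
elim: N => [|N IH]; first by rewrite big_ord0 subrr.
rewrite big_ord_recr IH /= /cross pdot_mact_sym; last exact: mpow_reversible.
have -> : mact (mpow P N.+1) f0 = fun s => mact (mpow P N.+1) g s - mact (mpow P N.+2) g s.
  by apply/funext => s; rewrite mact_mpow_center.
by rewrite pdotBl addrA subrK.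
Qed.

Lemma norm_self_le d : `|self d| <= K.
Proof.
rewrite (le_trans (ler_norm_sum _ _ _)) //; apply: ler_sum => s _.
rewrite !normrM (ger0_norm (pi_ge0 s)) ler_wpM2r ?ler_wpM2l //.
exact: norm_mact_mpow_le.
Qed.

Lemma asymp_var_poisson : asymp_var pi f P = 2 * pdot pi f0 g - pdot pi f0 f0.
Proof.
apply: (@limn_sub_bounded_divn _ _ _ (2 * (K + K)) (fun N => 2 * \sum_(k < N) cross k.+1)).
  move=> N N_gt0; rewrite var_sumE //.
  under eq_bigr => i _ do under eq_bigr => j _ do rewrite autocovE.
  rewrite sum_distn_telescope mulrBl mulrAC divff ?mul1r ?pnatr_eq0 -?lt0n //.
  congr (_ - _); rewrite /cross /pdot -big_split mulr_sumr -sumrB.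
  apply: eq_bigr => s _; rewrite mact_mpow0 mact_mpow1 /=.
  by have := g_poisson s; rewrite -/f0 => <-; ring.
move=> N; rewrite sum_cross_telescope normrM ger0_norm // ler_wpM2l //.
by rewrite (le_trans (ler_normB _ _)) // lerD ?norm_self_le.
Qed.

End AsymptoticVariance.

Section Irreducible.
Variables (R : realType) (T : finType) (P : T -> T -> R).
Hypothesis P_ge0 : forall x y, 0 <= P x y.
Hypothesis P_sum1 : forall x, \sum_y P x y = 1.

Lemma harmonic_max_step u w z : (forall x, mact P u x = u x) ->
  (forall v, u v <= u w) -> 0 < P w z -> u z = u w.
Proof.
move=> u_harm u_le Pwz_gt0.
have sum0 : \sum_v P w v * (u w - u v) = 0.
  under eq_bigr => v _ do rewrite mulrBr.
  by rewrite sumrB -mulr_suml P_sum1 mul1r -/(mact P u w) u_harm subrr.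
have F_ge0 v : 0 <= P w v * (u w - u v) by rewrite mulr_ge0 ?subr_ge0.
move: (psumr_eq0P (fun v _ => F_ge0 v) sum0 (i := z) isT) => /eqP.
by rewrite mulf_eq0 gt_eqF //= subr_eq0 => /eqP.
Qed.

Lemma harmonic_const u : irreducible P -> (forall x, mact P u x = u x) ->
  forall x y, u x = u y.
Proof.
move=> P_irr u_harm x y; pose m := Order.arg_max x predT u.
have u_le z : u z <= u m by rewrite /m; case: arg_maxP => // i _ u_le; apply: u_le.
suff u_max z : u z = u m by rewrite !u_max.
have [n] := P_irr m z; elim: n z => [|n IH] z.
  by rewrite /=; case: eqP => [->|]; rewrite ?ltxx.
move=> /lt0r_neq0/eqP/psumr_neq0P[w _|w /andP[_]]; first by rewrite mulr_ge0 ?mpow_ge0.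
rewrite mulr_ge0_gt0 ?mpow_ge0 // => /andP[/IH u_wm Pwz_gt0].
by rewrite (harmonic_max_step u_harm _ Pwz_gt0) // u_wm.
Qed.

Variable pi : T -> R.
Hypothesis pi_gt0 : forall x, 0 < pi x.
Hypothesis pi_sum1 : \sum_x pi x = 1.
Hypothesis P_rev : reversible pi P.
Hypothesis P_irr : irreducible P.

Lemma left_invariantE w : (forall t, \sum_s w s * P s t = w t) ->
  forall t, w t = (\sum_s w s) * pi t.
Proof.
move=> w_inv; pose u x := w x / pi x.
have u_harm x : mact P u x = u x.
  rewrite /u -[w x]w_inv mulr_suml; apply: eq_bigr => y _.
  have -> : P y x = pi x * P x y / pi y by rewrite P_rev mulrAC divff ?mul1r ?lt0r_neq0.
  by field; rewrite !gt_eqF.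
move=> t; have -> : \sum_s w s = u t.
  transitivity (\sum_s u t * pi s); last by rewrite -mulr_sumr pi_sum1 mulr1.
  by apply: eq_bigr => s _; rewrite (harmonic_const P_irr u_harm t s) divfK ?lt0r_neq0.
by rewrite divfK ?lt0r_neq0.
Qed.

Lemma sum_enum_val (F : T -> R) : \sum_t F t = \sum_(i < #|T|) F (enum_val i).
Proof. exact: big_enum_val. Qed.

Definition lapT : 'M[R]_#|T| :=
  \matrix_(i, j) ((i == j)%:R - P (enum_val j) (enum_val i)).

Lemma mulmx_lapT_row (v : 'rV[R]_#|T|) j :
  (v *m lapT) 0 j = v 0 j - \sum_i P (enum_val j) (enum_val i) * v 0 i.
Proof.
rewrite mxE; under eq_bigr => i _ do rewrite mxE mulrBr.
rewrite sumrB (bigD1 j) //= eqxx mulr1 big1 ?addr0 => [|i /negbTE ->]; last by rewrite mulr0.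
by congr (_ - _); apply: eq_bigr => i _; rewrite mulrC.
Qed.

Lemma mulmx_lapT (C : 'M[R]_#|T|) i j :
  (lapT *m C) i j = C i j - \sum_l P (enum_val l) (enum_val i) * C l j.
Proof.
rewrite mxE; under eq_bigr => l _ do rewrite mxE mulrBl.
rewrite sumrB (bigD1 i) //= eqxx mul1r big1 ?addr0 // => l.
by rewrite eq_sym => /negbTE ->; rewrite mul0r.
Qed.

(* Each column of [cokermx lapT] is a [P]-invariant measure, hence a multiple of [pi]. *)
Lemma centered_in_lapT h : pmean pi h = 0 -> (\row_j h (enum_val j) <= lapT)%MS.
Proof.
move=> h_mean0; rewrite submxE; apply/eqP/matrixP => k j; rewrite !mxE.
pose w x := cokermx lapT (enum_rank x) j.
have w_inv t : \sum_s w s * P s t = w t.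
  have := congr1 (fun M : 'M[R]_#|T| => M (enum_rank t) j) (mulmx_coker lapT).
  rewrite mulmx_lapT enum_rankK [X in _ = X -> _]mxE => /eqP.
  rewrite subr_eq0 => /eqP w_tE; rewrite [RHS]/w w_tE sum_enum_val.
  by apply: eq_bigr => l _; rewrite /w enum_valK mulrC.
transitivity (\sum_x h x * w x).
  by rewrite sum_enum_val; apply: eq_bigr => i _; rewrite /w mxE enum_valK.
transitivity ((\sum_s w s) * pmean pi h); last by rewrite h_mean0 mulr0.
by rewrite /pmean mulr_sumr; apply: eq_bigr => x _; rewrite (left_invariantE w_inv x); ring.
Qed.

Lemma poisson_solvable h : pmean pi h = 0 ->
  exists g, forall s, g s - mact P g s = h s.
Proof.
move=> /centered_in_lapT/submxP[D hD]; exists (fun s => D 0 (enum_rank s)) => s.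
have := congr1 (fun M : 'rV[R]_#|T| => M 0 (enum_rank s)) hD.
rewrite mulmx_lapT_row mxE enum_rankK => ->; congr (_ - _).
by rewrite /mact sum_enum_val; apply: eq_bigr => i _; rewrite enum_valK.
Qed.

End Irreducible.

Section Comparison.
Variables (R : realType) (T : finType) (pi : T -> R) (P Q : T -> T -> R).
Hypothesis pi_gt0 : forall x, 0 < pi x.
Hypothesis pi_sum1 : \sum_x pi x = 1.
Hypotheses (P_ge0 : forall x y, 0 <= P x y) (P_sum1 : forall x, \sum_y P x y = 1).
Hypotheses (Q_ge0 : forall x y, 0 <= Q x y) (Q_sum1 : forall x, \sum_y Q x y = 1).
Hypotheses (P_rev : reversible pi P) (Q_rev : reversible pi Q).
Hypothesis P_irr : irreducible P.

Lemma form_le_of_dominates h : efficiency_dominates pi P Q ->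
  pdot pi h (mact P h) <= pdot pi h (mact Q h).
Proof.
move=> dom; have pi_ge0 x : 0 <= pi x by apply: ltW.
pose f s := h s - mact Q h s.
have f_mean0 : pmean pi f = 0.
  rewrite /pmean; under eq_bigr do rewrite mulrBr.
  by apply/eqP; rewrite sumrB subr_eq0; apply/eqP/esym/(pmean_mact Q_sum1 Q_rev).
have f_centered : center pi f = f by apply/funext => s; rewrite /center f_mean0 subr0.
have [g g_poisson] := poisson_solvable P_ge0 P_sum1 pi_gt0 pi_sum1 P_rev P_irr f_mean0.
have := dom f.
rewrite (asymp_var_poisson P_ge0 P_sum1 P_rev pi_ge0 (g := g)) ?f_centered //.
rewrite (asymp_var_poisson Q_ge0 Q_sum1 Q_rev pi_ge0 (g := h)) ?f_centered //.
have := dirichlet_form_ge0 P_ge0 P_sum1 P_rev pi_ge0 (fun s => h s - g s).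
have -> : (fun s => h s - g s - mact P (fun t => h t - g t) s) =
    fun s => (h s - mact P h s) - f s.
  by apply/funext => s; rewrite mactB -g_poisson; ring.
have hfQ : pdot pi h f = pdot pi h h - pdot pi h (mact Q h) by rewrite pdotBr.
have hfP : pdot pi h f = pdot pi h g - pdot pi h (mact P g).
  by rewrite -pdotBr; congr pdot; apply/funext => s; rewrite g_poisson.
clearbody f.
(* [f = h - Q h = g - P g]: dominance gives [<f, g> <= <f, h>], and the Dirichlet form
   at [h - g] gives [<h - P h, h> >= 2 <f, h> - <f, g>]. *)
rewrite pdotBl !pdotBr !pdotBl -!pdot_mact_sym // (pdotC pi f h).
lra.
Qed.

End Comparison.

Section FormOrder.
Variables (R : realType) (T : finType) (pi : T -> R) (P Q : T -> T -> R).
Hypothesis pi_gt0 : forall x, 0 < pi x.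
Hypothesis form_le : forall h, pdot pi h (mact P h) <= pdot pi h (mact Q h).

Lemma form_le_diag x : P x x <= Q x x.
Proof.
have := form_le (fun s => (if s == x then 1 else 0) + 0 * (if s == x then 1 else 0)).
by rewrite !pdot_indicator2 !mul0r !addr0 ler_pM2l.
Qed.

Lemma form_le_eq : reversible pi P -> reversible pi Q ->
  (forall x, P x x = Q x x) -> P = Q.
Proof.
move=> P_rev Q_rev diag_eq; apply/funext => x; apply/funext => y.
have [<-|_] := eqVneq x y; first exact: diag_eq.
have form_le_xy c :=
  form_le (fun s => (if s == x then 1 else 0) + c * (if s == y then 1 else 0)).
apply: (mulfI (lt0r_neq0 (pi_gt0 x))).
have := form_le_xy 1; have := form_le_xy (-1).
rewrite !pdot_indicator2 !diag_eq !mulrDr !mul1r !mulN1r !mulrN -P_rev -Q_rev.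
lra.
Qed.

End FormOrder.

Theorem theorem7 (R : realType) (S : finType) (pi : S -> R) (P Q : S -> S -> R)
  (hpi : full_distribution pi)
  (hP : transition_matrix P) (hQ : transition_matrix Q)
  (iP : irreducible P) (iQ : irreducible Q)
  (rP : reversible pi P) (rQ : reversible pi Q)
  (dom : efficiency_dominates pi P Q) (neq : P <> Q) :
  trace P < trace Q.
Proof.
case: hpi => pi_gt0 pi_sum1; case: hP => P_ge0 P_sum1; case: hQ => Q_ge0 Q_sum1.
have form_le h :=
  form_le_of_dominates pi_gt0 pi_sum1 P_ge0 P_sum1 Q_ge0 Q_sum1 rP rQ iP h dom.
have diag_le := form_le_diag pi_gt0 form_le.
rewrite ltNge; apply/negP => trQ_le; apply/neq/(form_le_eq pi_gt0 form_le rP rQ) => x.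
have trace_gap0 : \sum_x (Q x x - P x x) = 0.
  apply/eqP; rewrite eq_le sumr_ge0 ?andbT => [|z _]; last by rewrite subr_ge0.
  by rewrite sumrB subr_le0.
apply/eqP; rewrite eq_sym -subr_eq0; apply/eqP.
by apply: (psumr_eq0P _ trace_gap0) => // z _; rewrite subr_ge0.
Qed.
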